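(* Let $G$ be a hued patch and let $\varphi$ be a 4-coloring (with colors in $\mathbb{Z}_2^2$) of the boundary of the outer face of $G$. If $\varphi$ extends to a 4-coloring of $G$, then $\varphi$ is viable.
   Context: A patch is a connected plane graph all of whose faces, except possibly the outer face, have length three. A hued graph is a graph $G$ with a proper coloring $\psi_G:V(G)\to\mathbb{Z}_3$ (hue); a dappled graph is a hued graph with additionally a proper coloring $\varphi_G:V(G)\to\mathbb{Z}_2^2$ (color). For a hued graph $H$ and a proper coloring $\theta:V(H)\to\mathbb{Z}_2^2$, $H^\theta$ denotes the dappled graph with color $\theta$. A homomorphism of dappled graphs maps adjacent vertices to adjacent vertices and preserves hue and color. The dappled triangular grid $\mathbf{T}$ has vertex set $\mathbb{Z}^2$, with $(i_1,j_1)$ and $(i_2,j_2)$ adjacent iff $(i_2-i_1,j_2-j_1)\in\{\pm(1,0),\pm(0,1),\pm(1,1)\}$, hue $(i+j)\bmod 3$ and color $(i\bmod 2,j\bmod 2)$ at $(i,j)$. A 4-coloring $\varphi$ of a connected hued graph $C$ is viable if $C^\varphi$ has a homomorphism to $\mathbf{T}$. The boundary of the outer face of $G$ is regarded as a hued graph with the hues inherited from $G$. *)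

From mathcomp Require Import all_boot all_order all_algebra.
Set Implicit Arguments. Unset Strict Implicit. Unset Printing Implicit Defensive.
Import GRing.Theory.
Local Open Scope ring_scope.
Local Open Scope nat_scope.

Definition simple_graph (V : finType) (adj : rel V) :=
  symmetric adj /\ irreflexive adj.

Definition connected_graph (V : finType) (adj : rel V) :=
  forall u v, connect adj u v.

Definition proper_on (V : finType) (C : eqType) (e : rel V) (c : V -> C) :=
  forall u v, e u v -> c u != c v.

(* rot v is a cyclic permutation of the neighbourhood of v (the cyclic order
   of the edges around v in the embedding); values outside N(v) are junk. *)
Definition rotation_system (V : finType) (adj : rel V) (rot : V -> V -> V) :=
  forall v,
    [/\ forall u, adj v u -> adj v (rot v u),
        forall u w, adj v u -> adj v w -> rot v u = rot v w -> u = w &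
        forall u w, adj v u -> adj v w -> exists k, iter k (rot v) u = w].

Definition darts (V : finType) (adj : rel V) : {set V * V} :=
  [set d | adj d.1 d.2].

Definition fmap (V : finType) (rot : V -> V -> V) (d : V * V) : V * V :=
  (d.2, rot d.2 d.1).

Definition face (V : finType) (rot : V -> V -> V) (d : V * V) : {set V * V} :=
  [set e | fconnect (fmap rot) d e].

Definition faces (V : finType) (adj : rel V) (rot : V -> V -> V)
  : {set {set V * V}} :=
  [set face rot d | d in darts adj].

(* A patch: a connected simple graph with a genus-0 rotation system (Euler's
   formula V - E + F = 2, i.e. a plane embedding), with outer face the face
   containing the dart o, all other faces having length 3.  The one-vertex
   graph (no edges) is also a patch; then o = (x,x) for its unique vertex x. *)
Definition patch (V : finType) (adj : rel V) (rot : V -> V -> V) (o : V * V) :=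
  [/\ simple_graph adj, connected_graph adj, rotation_system adj rot,
      (darts adj = set0 /\ o.1 = o.2) \/
      (adj o.1 o.2 /\ #|V| + #|faces adj rot| = (#|darts adj|)./2 + 2) &
      forall d, adj d.1 d.2 -> d \notin face rot o -> #|face rot d| = 3].

Definition bvert (V : finType) (adj : rel V) (rot : V -> V -> V) (o : V * V)
  : {set V} :=
  o.1 |: [set d.1 | d in [set d in face rot o | adj d.1 d.2]].

Definition bedge (V : finType) (adj : rel V) (rot : V -> V -> V) (o : V * V)
  : rel V :=
  fun u v => adj u v && (((u, v) \in face rot o) || ((v, u) \in face rot o)).

Definition Tadj (p q : int * int) : bool :=
  let a := (q.1 - p.1)%R in let b := (q.2 - p.2)%R in
  [|| (a == 1%R) && (b == 0%R), (a == (-1)%R) && (b == 0%R),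
      (a == 0%R) && (b == 1%R), (a == 0%R) && (b == (-1)%R),
      (a == 1%R) && (b == 1%R) | (a == (-1)%R) && (b == (-1)%R)].

Definition hueT (p : int * int) : 'Z_3 := ((p.1 + p.2)%R)%:~R%R.
Definition colorT (p : int * int) : 'Z_2 * 'Z_2 := (p.1%:~R%R, p.2%:~R%R).

(* viability of the coloring phi of the hued graph (A, e, psi):
   the dappled graph has a homomorphism into T *)
Definition viable (V : finType) (A : {set V}) (e : rel V)
  (psi : V -> 'Z_3) (phi : V -> 'Z_2 * 'Z_2) :=
  exists f : V -> int * int,
    (forall u v, u \in A -> v \in A -> e u v -> Tadj (f u) (f v)) /\
    (forall v, v \in A -> hueT (f v) = psi v /\ colorT (f v) = phi v).

(* For a proper colouring theta of the whole patch, send each dart (u, v) to the unique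
   unit vector of the grid with hue psi v - psi u and colour theta v - theta u.  Around a
   triangle the three hue differences coincide and the three colour differences are the
   three nonzero elements of Z_2^2, so the three vectors sum to zero: the steps form a
   closed 1-form.  The inner faces of a connected plane graph span its cycle space (by a
   rank count, this is Euler's formula), so the form is exact; integrating it from a grid
   point of the right hue and colour gives a homomorphism from G^theta to T, and its
   restriction to the outer boundary, where theta = phi, witnesses viability. *)

From mathcomp Require Import all_boot all_order all_algebra ring zify.
Set Implicit Arguments. Unset Strict Implicit. Unset Printing Implicit Defensive.
Import GRing.Theory Num.Theory.
Local Open Scope ring_scope.

Lemma Z3_cases (x : 'Z_3) : [\/ x = 0, x = 1 | x = 2].
Proof.
case: x => m Hm; case: m Hm => [|[|[|m]]] Hm.
- by constructor 1; apply/val_inj.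
- by constructor 2; apply/val_inj.
- by constructor 3; apply/val_inj.
- by [].
Qed.

Lemma Z2_cases (x : 'Z_2) : x = 0 \/ x = 1.
Proof.
case: x => m Hm; case: m Hm => [|[|m]] Hm.
- by left; apply/val_inj.
- by right; apply/val_inj.
- by [].
Qed.

Lemma Z22_cases (c : 'Z_2 * 'Z_2) :
  [\/ c = (0, 0), c = (1, 0), c = (0, 1) | c = (1, 1)].
Proof.
case: c => a b; case: (Z2_cases a) => ->; case: (Z2_cases b) => ->.
- exact: Or41.
- exact: Or43.
- exact: Or42.
- exact: Or44.
Qed.

Ltac Z3_Z22_cases h c :=
  case: (Z3_cases h) => ->; case: (Z22_cases c) => ->.

(* [(c1 + 4 (h - c1 - c2), c2)] has hue [h] and colour [(c1, c2)]. *)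
Lemma hueT_colorT_surj (h : 'Z_3) (c : 'Z_2 * 'Z_2) :
  exists z, hueT z = h /\ colorT z = c.
Proof.
pose n (k : nat) (x : 'I_k) : int := x.
set z := (n _ c.1 + 4 * (n _ h - n _ c.1 - n _ c.2), n _ c.2).
suff /andP[/eqP hz /eqP cz] : (hueT z == h) && (colorT z == c) by exists z.
by rewrite {}/z; Z3_Z22_cases h c.
Qed.

Lemma hueT_sub (p q : int * int) :
  hueT (p.1 - q.1, p.2 - q.2) = hueT p - hueT q.
Proof. by rewrite /hueT /= -intrB opprD addrACA. Qed.

Lemma colorT_sub (p q : int * int) :
  colorT (p.1 - q.1, p.2 - q.2) = colorT p - colorT q.
Proof. by rewrite /colorT /= !intrB. Qed.

Lemma Tadj_sub (p q : int * int) : Tadj p q = Tadj (0, 0) (q.1 - p.1, q.2 - p.2).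
Proof. by rewrite /Tadj /= !subr0. Qed.

(* [grid_step h c] is the unique neighbour of the origin of [T] with hue [h]
   and colour [c], for [h != 0] and [c != 0]. *)
Definition grid_step (h : 'Z_3) (c : 'Z_2 * 'Z_2) : int * int :=
  if h == 1 then
    (if c == (1, 0) then (1, 0) else if c == (0, 1) then (0, 1) else (-1, -1))
  else
    (if c == (1, 0) then (-1, 0) else if c == (0, 1) then (0, -1) else (1, 1)).

Section GridStep.
Variables (h : 'Z_3) (c : 'Z_2 * 'Z_2).
Hypotheses (h_neq0 : h != 0) (c_neq0 : c != 0).

Lemma Tadj_grid_step : Tadj (0, 0) (grid_step h c).
Proof. by move: h_neq0 c_neq0; Z3_Z22_cases h c. Qed.

Lemma hueT_grid_step : hueT (grid_step h c) = h.
Proof.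
by apply/eqP; move: h_neq0 c_neq0; Z3_Z22_cases h c.
Qed.

Lemma colorT_grid_step : colorT (grid_step h c) = c.
Proof.
by apply/eqP; move: h_neq0 c_neq0; Z3_Z22_cases h c.
Qed.

Lemma grid_stepN :
  grid_step (- h) (- c) = (- (grid_step h c).1, - (grid_step h c).2).
Proof. by move: h_neq0 c_neq0; Z3_Z22_cases h c. Qed.

End GridStep.

Lemma grid_step_triangle (a b c : 'Z_3) (x y z : 'Z_2 * 'Z_2) :
    a != b -> b != c -> c != a -> x != y -> y != z -> z != x ->
  let s := grid_step (b - a) (y - x) in
  let t := grid_step (c - b) (z - y) in
  let u := grid_step (a - c) (x - z) in
  s.1 + t.1 + u.1 = 0 /\ s.2 + t.2 + u.2 = 0.
Proof.
have cyc (G : zmodType) (p q r : G) : p - r = - ((q - p) + (r - q)).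
  by rewrite [q - p + _]addrC addrA subrK opprB.
have diff_neq0 (G : zmodType) (p q : G) : p != q -> q - p != 0.
  by rewrite subr_eq0 eq_sym.
move=> /diff_neq0 ab /diff_neq0 bc /diff_neq0 + /diff_neq0 xy /diff_neq0 yz /diff_neq0.
rewrite /= !(cyc _ a b c) !(cyc _ x y z) !oppr_eq0.
move: (b - a) (c - b) (y - x) (z - y) ab bc xy yz => h k e f.
by case: (Z3_cases h) => ->; case: (Z22_cases e) => ->;
   case: (Z3_cases k) => ->; case: (Z22_cases f) => ->.
Qed.

Section Faces.
Variables (V : finType) (adj : rel V) (rot : V -> V -> V).
Hypotheses (adj_sym : symmetric adj) (rot_sys : rotation_system adj rot).

Lemma rot_adj v u : adj v u -> adj v (rot v u).
Proof. by case: (rot_sys v) => + _ _; apply. Qed.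

Lemma fmap_dart : {homo fmap rot : d / d \in darts adj}.
Proof. by move=> [u v]; rewrite !inE /= => huv; apply: rot_adj; rewrite adj_sym. Qed.

Lemma fmap_inj : {in darts adj &, injective (fmap rot)}.
Proof.
move=> [u v] [u' v']; rewrite !inE /= => huv hu'v' [vv' hrot]; subst v'.
case: (rot_sys v) => _ rot_inj _.
by rewrite (rot_inj u u') ?(adj_sym v).
Qed.

Lemma face_dart d e : d \in darts adj -> e \in face rot d -> e \in darts adj.
Proof.
move=> hd; rewrite inE => /iter_findex <-.
by elim: (findex _ _ _) => //= n; apply: fmap_dart.
Qed.

Lemma face_eq d e : d \in darts adj -> e \in face rot d -> face rot e = face rot d.
Proof.
move=> hd he; have he' := face_dart hd he; rewrite inE in he.
apply/setP => x; rewrite !inE; apply/idP/idP; first exact: connect_trans.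
by apply: connect_trans; rewrite (fconnect_sym_in fmap_dart fmap_inj).
Qed.

Lemma face_fmap d : d \in darts adj -> face rot (fmap rot d) = face rot d.
Proof. by move=> hd; apply: face_eq; rewrite // inE fconnect1. Qed.

Lemma sum_face_fmap (R : nmodType) (F : V * V -> R) d : d \in darts adj ->
  \sum_(x in face rot d) F (fmap rot x) = \sum_(x in face rot d) F x.
Proof.
move=> hd.
have inj : {in face rot d &, injective (fmap rot)}.
  by move=> x y /(face_dart hd) hx /(face_dart hd) hy; apply: fmap_inj.
have img : fmap rot @: face rot d = face rot d.
  apply/eqP; rewrite eqEcard card_in_imset // leqnn andbT.
  apply/subsetP => _ /imsetP[x hx ->].
  by rewrite -(face_eq hd hx) -face_fmap ?(face_dart hd hx) // inE connect0.
by rewrite -[in RHS]img big_imset.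
Qed.

Lemma sum_face_coboundary (R : zmodType) (g : V -> R) d : d \in darts adj ->
  \sum_(x in face rot d) (g x.2 - g x.1) = 0.
Proof.
move=> hd; rewrite sumrB.
by rewrite -(sum_face_fmap (fun x => g x.1)) // subrr.
Qed.

Lemma face_triangle d : d \in darts adj -> #|face rot d| = 3%N ->
  fmap rot (fmap rot (fmap rot d)) = d /\
  forall (R : nmodType) (F : V * V -> R),
    \sum_(x in face rot d) F x = F d + F (fmap rot d) + F (fmap rot (fmap rot d)).
Proof.
move=> hd hcard.
have order3 : order (fmap rot) d = 3%N.
  by rewrite -hcard /order; apply: eq_card => x; rewrite [in RHS]inE.
split; first by have := iter_order_in fmap_dart fmap_inj hd; rewrite order3.
move=> R F; rewrite (eq_bigl (mem (orbit (fmap rot) d))); last first.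
  by move=> x; rewrite inE fconnect_orbit.
rewrite -big_uniq ?orbit_uniq //.
have -> : orbit (fmap rot) d = [:: d; fmap rot d; fmap rot (fmap rot d)].
  by rewrite /orbit order3.
by rewrite !big_cons big_nil /= addr0 addrA.
Qed.

End Faces.

Definition rev_dart (V : Type) (d : V * V) : V * V := (d.2, d.1).

Lemma rev_dartK {V : Type} : involutive (@rev_dart V).
Proof. by case. Qed.

Definition antisymmetric_form (V : finType) (adj : rel V) (R : zmodType)
    (dl : V * V -> R) :=
  forall d, d \in darts adj -> dl (rev_dart d) = - dl d.

Definition closed_form (V : finType) (adj : rel V) (rot : V -> V -> V) (o : V * V)
    (R : zmodType) (dl : V * V -> R) :=
  antisymmetric_form adj dl /\
  forall d, d \in darts adj -> d \notin face rot o -> \sum_(x in face rot d) dl x = 0.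

Definition exact_form (V : finType) (adj : rel V) (R : zmodType) (dl : V * V -> R) :=
  exists p : V -> R, forall u v, adj u v -> dl (u, v) = p v - p u.

Section Exactness.
Variables (V : finType) (adj : rel V) (rot : V -> V -> V) (o : V * V).
Hypotheses (adj_sym : symmetric adj) (adj_irr : irreflexive adj).
Hypotheses (rot_sys : rotation_system adj rot) (adj_conn : connected_graph adj).
Hypothesis o_dart : o \in darts adj.
Hypothesis euler : (#|V| + #|faces adj rot| = (#|darts adj|)./2 + 2)%N.

Definition oedge : pred (V * V) :=
  [pred d | adj d.1 d.2 && (enum_rank d.1 < enum_rank d.2)%N].

Lemma rev_dart_dart d : (rev_dart d \in darts adj) = (d \in darts adj).
Proof. by rewrite !inE adj_sym. Qed.

Lemma oedge_rev d : d \in darts adj -> (rev_dart d \in oedge) = (d \notin oedge).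
Proof.
case: d => u v; rewrite inE /= => huv; rewrite !inE /= adj_sym huv /=.
have : enum_rank u != enum_rank v.
  by rewrite (inj_eq enum_rank_inj); apply: contraTneq huv => ->; rewrite adj_irr.
by case: ltngtP => // /val_inj ->; rewrite eqxx.
Qed.

Lemma sum_oedge (R : nmodType) (G : V * V -> R) :
  \sum_(x in oedge) (G x + G (rev_dart x)) = \sum_(x in darts adj) G x.
Proof.
rewrite big_split (bigID oedge (mem (darts adj))) /=; congr (_ + _).
  by apply: eq_bigl => x; rewrite !inE /= andbA andbb.
rewrite [RHS](reindex_inj (inv_inj rev_dartK)); apply: eq_bigl => x /=.
rewrite rev_dart_dart; case hx: (x \in darts adj) => /=.
  by rewrite -oedge_rev ?rev_dart_dart // rev_dartK.
by apply: contraFF hx; rewrite !inE => /andP[].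
Qed.

Lemma card_darts : #|darts adj| = (2 * #|oedge|)%N.
Proof.
have := sum_oedge (fun=> 1%N); rewrite !sum_nat_const muln1 => <-.
by rewrite mulnC.
Qed.

Definition inner_faces : {set {set V * V}} := faces adj rot :\ face rot o.

Lemma card_inner_faces : (#|inner_faces| + #|V| - 1)%N = #|oedge|.
Proof.
have outer : face rot o \in faces adj rot by apply/imsetP; exists o.
move: euler; rewrite card_darts mul2n doubleK /inner_faces (cardsD1 (face rot o)) outer add1n.
by set F := #|_ :\ _|; set E := #|oedge|; lia.
Qed.

Lemma inner_faceP f : f \in inner_faces ->
  exists d, [/\ d \in darts adj, d \notin face rot o & f = face rot d].
Proof.
rewrite !inE => /andP[inner /imsetP[d hd f_eq]]; subst f; exists d; split => //.
by apply: contra inner => /(face_eq adj_sym rot_sys o_dart) ->.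
Qed.

Lemma mem_face_eq f d : f \in faces adj rot -> d \in darts adj ->
  (d \in f) = (f == face rot d).
Proof.
case/imsetP => e he -> hd; apply/idP/eqP => [hde | ->]; last by rewrite inE connect0.
by rewrite (face_eq adj_sym rot_sys he hde).
Qed.

(* Row vectors are cochains: [d0mx] maps a function on vertices to its differences
   along the oriented edges, [d1mx] maps a function on oriented edges to its sums
   around the inner faces. *)
Definition d0mx : 'M[rat]_(#|V|, #|oedge|) :=
  \matrix_(i < #|V|, j < #|oedge|)
    ((enum_val i == (enum_val j).2)%:R - (enum_val i == (enum_val j).1)%:R).

Definition d1mx : 'M[rat]_(#|oedge|, #|inner_faces|) :=
  \matrix_(j < #|oedge|, k < #|inner_faces|)
    ((enum_val j \in (enum_val k : {set _}))%:R
     - (rev_dart (enum_val j) \in (enum_val k : {set _}))%:R).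

Lemma mul_d0mx (r : 'rV[rat]_#|V|) j :
  (r *m d0mx) 0 j = r 0 (enum_rank (enum_val j).2) - r 0 (enum_rank (enum_val j).1).
Proof.
have pick w : \sum_i r 0 i * (enum_val i == w)%:R = r 0 (enum_rank w).
  rewrite (bigD1 (enum_rank w)) //= enum_rankK eqxx mulr1 big1 ?addr0 // => i hi.
  rewrite (_ : (enum_val i == w) = false) ?mulr0 //.
  by apply: contraNF hi => /eqP <-; rewrite enum_valK.
by rewrite !mxE; under eq_bigr do rewrite mxE mulrBr; rewrite sumrB !pick.
Qed.

Lemma mul_d1mx (F : V * V -> rat) k : antisymmetric_form adj F ->
  (\row_j F (enum_val j) *m d1mx) 0 k = \sum_(x in enum_val k) F x.
Proof.
move=> F_anti; have [d [hd _ f_face]] := inner_faceP (enum_valP k).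
set f := enum_val k in f_face *.
pose G x := F x * (x \in f)%:R.
have -> : (\row_j F (enum_val j) *m d1mx) 0 k = \sum_(j in oedge) (G j + G (rev_dart j)).
  rewrite mxE [RHS]big_enum_val.
  apply: eq_bigr => j _; rewrite !mxE mulrBr /G F_anti ?mulNr //.
  by have := enum_valP j; rewrite !inE => /andP[].
have f_darts : {subset f <= darts adj} by rewrite f_face => x; apply: face_dart.
rewrite sum_oedge [RHS](eq_bigl (fun x => (x \in darts adj) && (x \in f))); last first.
  by move=> x; case hx: (x \in f); rewrite ?andbF ?andbT ?f_darts.
rewrite big_mkcondr; apply: eq_bigr => x _.
by rewrite /G; case: (x \in f); rewrite ?mulr1 ?mulr0.
Qed.

Lemma d0mx_mul_d1mx : d0mx *m d1mx = 0.
Proof.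
apply/row_matrixP => i; rewrite row_mul row0.
pose g (v : V) : rat := (enum_val i == v)%:R.
have -> : row i d0mx = \row_j (g (enum_val j).2 - g (enum_val j).1).
  by apply/rowP => j; rewrite !mxE.
apply/rowP => k; rewrite (@mul_d1mx (fun x => g x.2 - g x.1)) ?mxE; last first.
  by move=> d _; rewrite opprB.
have [d [hd _ ->]] := inner_faceP (enum_valP k).
exact: sum_face_coboundary.
Qed.

Lemma d0mx_potential (r : 'rV[rat]_#|V|) (F : V * V -> rat) :
    antisymmetric_form adj F -> \row_j F (enum_val j) = r *m d0mx ->
  forall u v, adj u v -> F (u, v) = r 0 (enum_rank v) - r 0 (enum_rank u).
Proof.
move=> F_anti Fr u v huv.
have row_oedge d : d \in oedge -> F d = r 0 (enum_rank d.2) - r 0 (enum_rank d.1).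
  by move=> hd; rewrite -(enum_rankK_in hd hd) -mul_d0mx -Fr mxE.
have uv_dart : (u, v) \in darts adj by rewrite inE.
case: (boolP ((u, v) \in oedge)) => [/row_oedge // | ].
rewrite -oedge_rev // => /row_oedge; rewrite F_anti // => /eqP.
by rewrite eqr_oppLR opprB => /eqP.
Qed.

Lemma kermx_d0mx_const : (kermx d0mx <= (const_mx 1 : 'rV[rat]_#|V|))%MS.
Proof.
apply/row_subP => i.
have : \row_j (0 : rat) = row i (kermx d0mx) *m d0mx.
  by rewrite -row_mul mulmx_ker row0; apply/rowP => j; rewrite !mxE.
move: (row i (kermx d0mx)) => r r0.
have zero_anti : antisymmetric_form adj (fun _ => 0 : rat) by move=> d _; rewrite oppr0.
have r_const v : r 0 (enum_rank v) = r 0 (enum_rank o.1).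
  have cl : closed adj [pred x | r 0 (enum_rank x) == r 0 (enum_rank o.1)].
    move=> x y /(d0mx_potential zero_anti r0) /esym /eqP.
    by rewrite subr_eq0 !inE => /eqP ->.
  by have := closed_connect cl (adj_conn o.1 v); rewrite !inE eqxx => /esym /eqP.
have -> : r = r 0 (enum_rank o.1) *: const_mx 1.
  by apply/rowP => j; rewrite !mxE mulr1 -[j]enum_valK r_const.
exact/scalemx_sub/submx_refl.
Qed.

Lemma rank_d0mx : (#|V| - 1 <= \rank d0mx)%N.
Proof.
have := mxrankS kermx_d0mx_const; rewrite mxrank_ker.
have := rank_leq_row (const_mx 1 : 'rV[rat]_#|V|).
lia.
Qed.

Definition face_vec (f : {set V * V}) : 'rV[rat]_#|inner_faces| :=
  \row_k (enum_val k == f)%:R.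

(* Propagates from the outer face, whose indicator is [0] as it is not indexed,
   across edges to every face; hence [d1mx] has full row rank. *)
Let spanned d := (face_vec (face rot d) <= d1mx)%MS.

Lemma face_vec_sub_rev d : d \in darts adj ->
  (face_vec (face rot d) - face_vec (face rot (rev_dart d)) <= d1mx)%MS.
Proof.
have row_d1mx e (he : e \in oedge) :
    row (enum_rank_in he e) d1mx = face_vec (face rot e) - face_vec (face rot (rev_dart e)).
  have e_dart : e \in darts adj by move: he; rewrite !inE => /andP[].
  apply/rowP => k; rewrite !mxE enum_rankK_in //.
  have k_face : enum_val k \in faces adj rot.
    by have := enum_valP k; rewrite !inE => /andP[].
  by rewrite !(mem_face_eq k_face) ?rev_dart_dart.
move=> hd; case: (boolP (d \in oedge)) => [hd' | ]; first by rewrite -row_d1mx row_sub.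
rewrite -oedge_rev // => hd'.
have := row_sub (enum_rank_in hd' (rev_dart d)) d1mx; rewrite row_d1mx rev_dartK.
by move/(scalemx_sub (-1)); rewrite scaleN1r opprB.
Qed.

Lemma spanned_rev d : d \in darts adj -> spanned d -> spanned (rev_dart d).
Proof.
move=> hd hsp; have := addmx_sub hsp (scalemx_sub (-1) (face_vec_sub_rev hd)).
by rewrite scaleN1r opprB addrC subrK.
Qed.

Lemma spanned_outer : spanned o.
Proof.
rewrite /spanned (_ : face_vec _ = 0) ?sub0mx //; apply/rowP => k; rewrite !mxE.
by have := enum_valP k; rewrite !inE => /andP[/negbTE ->].
Qed.

Lemma spanned_around v u : adj v u -> spanned (v, u) ->
  forall w, adj v w -> spanned (v, w).
Proof.
move=> hvu hsp x hvx; case: (rot_sys v) => _ _ /(_ u x hvu hvx) [n <-].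
elim: n => //= n IHn; set w := iter n (rot v) u in IHn *.
have hw : (v, w) \in darts adj.
  by rewrite inE /w; elim: n {IHn w} => //= n; apply: (rot_adj rot_sys).
rewrite -[(v, _)]/(fmap rot (rev_dart (v, w))) /spanned.
rewrite (face_fmap adj_sym rot_sys) ?rev_dart_dart //.
exact: spanned_rev.
Qed.

Lemma spanned_all d : d \in darts adj -> spanned d.
Proof.
pose P := [pred v | [forall w, adj v w ==> spanned (v, w)]].
have step x y : adj x y -> x \in P -> y \in P.
  move=> hxy /forall_inP/(_ y hxy) hsp; apply/forall_inP.
  have xy_dart : (x, y) \in darts adj by rewrite inE.
  by apply: (spanned_around _ (spanned_rev xy_dart hsp)); rewrite adj_sym.
have cl : closed adj P.
  by move=> x y hxy; apply/idP/idP; apply: step; rewrite // adj_sym.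
have Po : o.1 \in P.
  have o_adj : adj o.1 o.2 by move: o_dart; rewrite inE.
  apply/forall_inP; apply: (spanned_around o_adj).
  by rewrite -surjective_pairing; exact: spanned_outer.
case: d => u v; rewrite inE /= => huv.
rewrite (closed_connect cl (adj_conn o.1 u)) in Po.
exact: (forall_inP Po).
Qed.

Lemma d1mx_row_full : row_full d1mx.
Proof.
rewrite -sub1mx; apply/row_subP => k; rewrite row1.
have [d [hd _ k_face]] := inner_faceP (enum_valP k).
suff -> : delta_mx 0 k = face_vec (face rot d) by exact: spanned_all.
by apply/rowP => j; rewrite !mxE -k_face (inj_eq enum_val_inj).
Qed.

Lemma ker_d1mx_sub_d0mx : (kermx d1mx <= d0mx)%MS.
Proof.
have d0_sub : (d0mx <= kermx d1mx)%MS by rewrite sub_kermx d0mx_mul_d1mx.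
have V_gt0 : (0 < #|V|)%N by apply/card_gt0P; exists o.1.
have := mxrank_leqif_sup d0_sub; rewrite mxrank_ker (eqP d1mx_row_full) => -[le <-].
by have := rank_d0mx; have := card_inner_faces; lia.
Qed.

Lemma closed_form_exact_rat (dl : V * V -> rat) :
  closed_form adj rot o dl -> exact_form adj dl.
Proof.
move=> [dl_anti dl_closed].
have dl_ker : (\row_j dl (enum_val j) <= kermx d1mx)%MS.
  rewrite sub_kermx; apply/eqP/rowP => k; rewrite mul_d1mx // mxE.
  by have [d [hd hout ->]] := inner_faceP (enum_valP k); apply: dl_closed.
have /submxP[q dl_q] := submx_trans dl_ker ker_d1mx_sub_d0mx.
by exists (fun v => q 0 (enum_rank v)); apply: d0mx_potential.
Qed.

End Exactness.

Lemma connected_eq_diff (T : finType) (e : rel T) (G : zmodType) (f g : T -> G) a :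
    connected_graph e -> f a = g a ->
    (forall x y, e x y -> f y - f x = g y - g x) ->
  f =1 g.
Proof.
move=> e_conn fga fg_diff b.
have cl : closed e [pred x | f x - g x == f a - g a].
  move=> x y /fg_diff exy; rewrite !inE.
  by rewrite -[g y](subrK (g x)) -exy opprD addrA subKr.
have := closed_connect cl (e_conn a b); rewrite !inE eqxx fga subrr => /esym /eqP.
by move/eqP; rewrite subr_eq0 => /eqP.
Qed.

Lemma patch_closed_form_exact (V : finType) (adj : rel V) (rot : V -> V -> V) (o : V * V)
    (dl : V * V -> int) :
  patch adj rot o -> closed_form adj rot o dl -> exact_form adj dl.
Proof.
case=> [[adj_sym adj_irr] adj_conn rot_sys [[no_darts _] | [o_adj euler]] _].
  move=> _; exists (fun=> 0) => u v huv.
  have : (u, v) \in darts adj by rewrite inE.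
  by rewrite no_darts inE.
move=> [dl_anti dl_closed].
have o_dart : o \in darts adj by rewrite inE.
have [|p dl_p] := closed_form_exact_rat adj_sym adj_irr rot_sys adj_conn o_dart euler
  (dl := fun d => (dl d)%:~R).
  split=> [d hd | d hd hout]; first by rewrite dl_anti // intrN.
  by rewrite -rmorph_sum dl_closed.
have p_int w : p w - p o.1 \is a Num.int.
  have cl : closed adj [pred w | p w - p o.1 \is a Num.int].
    move=> x y hxy; rewrite !inE -[p y](subrK (p x)) -(dl_p x y hxy) -addrA.
    by rewrite (rpredDl _ (intr_int _ _)).
  by have := closed_connect cl (adj_conn o.1 w); rewrite !inE subrr rpred0.
exists (fun w => Num.floor (p w - p o.1)) => u v huv.
apply: (@intr_inj rat); rewrite intrB !floorK ?p_int // dl_p //.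
by rewrite opprB addrA subrK.
Qed.

Section DappledPatch.
Variables (V : finType) (adj : rel V) (rot : V -> V -> V) (o : V * V).
Variables (psi : V -> 'Z_3) (theta : V -> 'Z_2 * 'Z_2).
Hypothesis G_patch : patch adj rot o.
Hypotheses (psi_proper : proper_on adj psi) (theta_proper : proper_on adj theta).

Definition edge_step (d : V * V) : int * int :=
  grid_step (psi d.2 - psi d.1) (theta d.2 - theta d.1).

Lemma edge_step_neq0 d : d \in darts adj ->
  psi d.2 - psi d.1 != 0 /\ theta d.2 - theta d.1 != 0.
Proof.
rewrite inE => hd; split; rewrite subr_eq0 eq_sym;
  [exact: psi_proper | exact: theta_proper].
Qed.

Lemma edge_step_rev d : d \in darts adj ->
  edge_step (rev_dart d) = (- (edge_step d).1, - (edge_step d).2).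
Proof.
move=> /edge_step_neq0[psi_d theta_d].
by rewrite /edge_step /= -(opprB (psi d.2)) -(opprB (theta d.2)) grid_stepN.
Qed.

Lemma edge_step_face d : d \in darts adj -> d \notin face rot o ->
  \sum_(x in face rot d) (edge_step x).1 = 0 /\
  \sum_(x in face rot d) (edge_step x).2 = 0.
Proof.
have [[adj_sym _] _ rot_sys _ inner_tri] := G_patch.
move=> hd hout; have hd' : adj d.1 d.2 by rewrite inE in hd.
have [cyc3 sum3] := face_triangle adj_sym rot_sys hd (inner_tri d hd' hout).
rewrite !sum3; case: d hd' cyc3 {hd hout sum3} => a b /= hab [rot_c _].
set c := rot b a in rot_c *.
have hbc : adj b c by apply: (rot_adj rot_sys); rewrite adj_sym.
have hca : adj c a by rewrite -rot_c; apply: (rot_adj rot_sys); rewrite adj_sym.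
rewrite /edge_step /= rot_c.
by apply: grid_step_triangle; rewrite ?psi_proper ?theta_proper.
Qed.

Lemma edge_step_exact :
  exists p : V -> int * int, forall u v, adj u v ->
    edge_step (u, v) = ((p v).1 - (p u).1, (p v).2 - (p u).2).
Proof.
have closed_coord (pr : int * int -> int) : {morph pr : z / (- z.1, - z.2) >-> - z} ->
    (forall d, d \in darts adj -> d \notin face rot o ->
      \sum_(x in face rot d) pr (edge_step x) = 0) ->
    exact_form adj (pr \o edge_step).
  move=> prN pr_face; apply: (patch_closed_form_exact G_patch); split => // d hd.
  by rewrite /= edge_step_rev // prN.
have [p1 p1E] : exact_form adj (fst \o edge_step).
  by apply: closed_coord => // d hd /(edge_step_face hd)[].
have [p2 p2E] : exact_form adj (snd \o edge_step).
  by apply: closed_coord => // d hd /(edge_step_face hd)[].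
exists (fun v => (p1 v, p2 v)) => u v huv.
by rewrite /= -(p1E u v huv) -(p2E u v huv) -surjective_pairing.
Qed.

Lemma patch_dappled_hom :
  exists f : V -> int * int,
    (forall u v, adj u v -> Tadj (f u) (f v)) /\
    (forall v, hueT (f v) = psi v /\ colorT (f v) = theta v).
Proof.
have [_ adj_conn _ _ _] := G_patch.
have [p pE] := edge_step_exact.
have [z0 [z0_hue z0_col]] := hueT_colorT_surj (psi o.1) (theta o.1).
pose f v := (z0.1 + ((p v).1 - (p o.1).1), z0.2 + ((p v).2 - (p o.1).2)).
have f_o : f o.1 = z0 by rewrite /f !subrr !addr0 -surjective_pairing.
have f_step u v : adj u v -> ((f v).1 - (f u).1, (f v).2 - (f u).2) = edge_step (u, v).
  by move=> huv; rewrite pE //; congr pair; rewrite /f /=; ring.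
have step_neq0 u v : adj u v -> psi v - psi u != 0 /\ theta v - theta u != 0.
  by move=> huv; apply: (@edge_step_neq0 (u, v)); rewrite inE.
exists f; split => [u v huv | v].
  by rewrite Tadj_sub f_step //; have [] := step_neq0 u v huv; apply: Tadj_grid_step.
split; [apply: (@connected_eq_diff _ _ _ (hueT \o f) psi o.1 adj_conn) |
        apply: (@connected_eq_diff _ _ _ (colorT \o f) theta o.1 adj_conn)];
  rewrite /= ?f_o // => x y hxy; have [] := step_neq0 x y hxy.
- by rewrite -hueT_sub f_step //; apply: hueT_grid_step.
- by rewrite -colorT_sub f_step //; apply: colorT_grid_step.
Qed.

End DappledPatch.

Theorem corollary8 (V : finType) (adj : rel V) (rot : V -> V -> V) (o : V * V)
  (psi : V -> 'Z_3) (phi : V -> 'Z_2 * 'Z_2) :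
  patch adj rot o ->
  proper_on adj psi ->
  proper_on (bedge adj rot o) phi ->
  (exists theta : V -> 'Z_2 * 'Z_2,
      proper_on adj theta /\ (forall v, v \in bvert adj rot o -> theta v = phi v)) ->
  viable (bvert adj rot o) (bedge adj rot o) psi phi.
Proof.
move=> G_patch psi_proper _ [theta [theta_proper theta_phi]].
have [f [f_adj f_dappled]] := patch_dappled_hom G_patch psi_proper theta_proper.
exists f; split => [u v _ _ /andP[huv _] | v hv]; first exact: f_adj.
by have [-> ->] := f_dappled v; rewrite theta_phi.
Qed.
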